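(* Let $k>0$ and consider the system of ODEs, for $r>0$, $\theta$, $z$, $p_R$, $p_S$ real, \[ \dot r = p_R,\quad \dot\theta = \frac{p_S}{r^2},\quad \dot z = \frac{p_S}{2},\quad \dot p_R = \frac{p_S^2}{r^3} - \frac{2kr^3}{(r^4+16z^2)^{3/2}},\quad \dot p_S = -\frac{8kr^2 z}{(r^4+16z^2)^{3/2}}, \] with first integrals $H = \frac12\big(p_R^2+\frac{p_S^2}{r^2}\big) - \frac{k}{\sqrt{r^4+16z^2}}$, \begin{align*} F_1 &= \Big(p_Rp_Sr-2p_R^2z+\frac{2p_S^2z}{r^2}\Big)\cos(2\theta) + \Big(\frac{4p_Rp_Sz}{r}-p_S^2+\frac{kr^2}{\sqrt{r^4+16z^2}}\Big)\sin(2\theta),\\ F_2 &= -\Big(p_Rp_Sr-2p_R^2z+\frac{2p_S^2z}{r^2}\Big)\sin(2\theta) + \Big(\frac{4p_Rp_Sz}{r}-p_S^2+\frac{kr^2}{\sqrt{r^4+16z^2}}\Big)\cos(2\theta),\\ F_3 &= (2zp_R-rp_S)^2 + 4z^2\Big(\frac{p_S^2}{r^2}+\frac{2k}{\sqrt{r^4+16z^2}}\Big). \end{align*} Let $J\ge 0$ and (when $J>0$) $\theta_0\in[0,\pi)$ be defined by $F_1 = J\sin(2\theta_0)$, $F_2 = J\cos(2\theta_0)$ (so $J^2 = F_1^2+F_2^2 = 2HF_3+k^2$). Then every trajectory with fixed values of $H, F_3, \theta_0$ lies on a surface (in coordinates $(r,\theta,z)$) as follows: (i) in the general case $F_3>0$,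 $J>0$, the surface \[ F_3 = 8z^2H + k\sqrt{r^4+16z^2} - \sqrt{k^2+2HF_3}\, r^2\cos\big(2(\theta-\theta_0)\big); \] (ii) in the minimum energy case $F_3>0$, $J=0$, the ellipsoid of revolution $4k^2z^2 + kF_3 r^2 = F_3^2$; (iii) in the degenerate case $F_3=0$, the straight horizontal line through the origin given by $z=0$, $\theta = \theta_0 \bmod \pi$.
   Context: Cylindrical coordinates $x=r\cos\theta$, $y=r\sin\theta$ on $\mathbb{R}^3$ (the Heisenberg group); the system describes nonholonomic motion on the Heisenberg group in the potential $-k/\sqrt{r^4+16z^2}$. $H,F_1,F_2,F_3$ are constant along solutions, and $F_3\ge 0$. *)

From Stdlib Require Import Reals ZArith.
From Coquelicot Require Import Coquelicot.
Open Scope R_scope.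

Definition Dq (r z : R) : R := r ^ 4 + 16 * z ^ 2.

Definition Hf (k r th z pR pS : R) : R :=
  1 / 2 * (pR ^ 2 + pS ^ 2 / r ^ 2) - k / sqrt (Dq r z).

Definition Af (k r z pR pS : R) : R :=
  pR * pS * r - 2 * pR ^ 2 * z + 2 * pS ^ 2 * z / r ^ 2.
Definition Bf (k r z pR pS : R) : R :=
  4 * pR * pS * z / r - pS ^ 2 + k * r ^ 2 / sqrt (Dq r z).

Definition F1f (k r th z pR pS : R) : R :=
  Af k r z pR pS * cos (2 * th) + Bf k r z pR pS * sin (2 * th).
Definition F2f (k r th z pR pS : R) : R :=
  - (Af k r z pR pS * sin (2 * th)) + Bf k r z pR pS * cos (2 * th).
Definition F3f (k r th z pR pS : R) : R :=
  (2 * z * pR - r * pS) ^ 2 + 4 * z ^ 2 * (pS ^ 2 / r ^ 2 + 2 * k / sqrt (Dq r z)).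

(* (r,th,z,pR,pS) is a solution of the ODE system on the open interval (a,b).
   (r^4+16z^2)^{3/2} is written as D * sqrt D. *)
Definition is_trajectory (k a b : R) (r th z pR pS : R -> R) : Prop :=
  forall t, a < t < b ->
    0 < r t /\
    is_derive r t (pR t) /\
    is_derive th t (pS t / (r t) ^ 2) /\
    is_derive z t (pS t / 2) /\
    is_derive pR t (pS t ^ 2 / r t ^ 3
        - 2 * k * r t ^ 3 / (Dq (r t) (z t) * sqrt (Dq (r t) (z t)))) /\
    is_derive pS t (- (8 * k * r t ^ 2 * z t)
        / (Dq (r t) (z t) * sqrt (Dq (r t) (z t)))).

(* H and F3 are conserved, and the pair (A, B) = (Af, Bf) obtained by rotating (F1, F2)
   through the angle 2θ obeys A' = -2θ'B, B' = 2θ'A along trajectories, so F1 and F2 are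
   conserved too.  Pointwise, A^2 + B^2 = k^2 + 2 H F3, which identifies J with
   sqrt (k^2 + 2 H F3), the phase relation gives B = J cos (2(θ - θ0)), and
   F3 = 8 z^2 H + k S - r^2 B with S = sqrt (r^4 + 16 z^2); this is the surface (i).
   When J = 0, B = 0 and 2 H F3 = -k^2 turn that identity into a quadratic equation for F3
   with roots k (S ± r^2) / 2; the bound F3 >= 8 k z^2 / S excludes the smaller one, and
   the larger one is the ellipsoid (ii).  When F3 = 0 the same bound forces z = 0 and
   p_S = 0, so θ is constant, and B = k = J at the initial time forces θ = θ0 mod π. *)
From Stdlib Require Import Reals ZArith Lra.
From Coquelicot Require Import Coquelicot.
Open Scope R_scope.

Lemma is_derive_0_const (G : R -> R) (a b t0 t : R) :
  a < t0 < b -> a < t < b -> (forall s, a < s < b -> is_derive G s 0) -> G t = G t0.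
Proof.
intros Ht0 Ht HG.
destruct (Rtotal_order t t0) as [Hlt | [-> | Hgt]].
- apply eq_is_derive; [intros s Hs; apply HG; lra | lra].
- reflexivity.
- symmetry; apply eq_is_derive; [intros s Hs; apply HG; lra | lra].
Qed.

(* auto_derive states its derivatives for eta-expanded functions. *)
Lemma Derive_eta (f : R -> R) (t l : R) : is_derive f t l -> Derive (fun x => f x) t = l.
Proof. apply is_derive_unique. Qed.

Lemma cos_2a_eq_1 (x : R) : cos (2 * x) = 1 -> exists n : Z, x = IZR n * PI.
Proof. rewrite cos_2a_sin. intros Hc. apply sin_eq_0_0. nra. Qed.

Lemma rotation_invariants (A B th : R -> R) (w t : R) :
  is_derive th t w -> is_derive A t (- 2 * w * B t) -> is_derive B t (2 * w * A t) ->
  is_derive (fun s => A s * cos (2 * th s) + B s * sin (2 * th s)) t 0 /\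
  is_derive (fun s => - (A s * sin (2 * th s)) + B s * cos (2 * th s)) t 0.
Proof.
intros Dth DA DB.
split; auto_derive; try (repeat split; eexists; eassumption);
  rewrite (Derive_eta _ _ _ Dth), (Derive_eta _ _ _ DA), (Derive_eta _ _ _ DB); ring.
Qed.

(* field_simplify leaves a numerator polynomial in s of degree at most 4, which
   vanishes once it is reduced with s ^ 2 = D. *)
Ltac field_mod_sqr HS2 :=
  lazymatch type of HS2 with ?s ^ 2 = ?D =>
    assert (s ^ 3 = D * s) as HS3 by (rewrite <- HS2; ring);
    assert (s ^ 4 = D ^ 2) as HS4 by (rewrite <- HS2; ring);
    apply Rminus_diag_uniq; field_simplify;
    [ unfold Rdiv; apply Rmult_eq_0_compat_r; rewrite ?HS4, ?HS3, ?HS2; ring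
    | repeat split; lra .. ]
  end.

Lemma sqrt_Dq_pos (r z : R) : 0 < r -> 0 < sqrt (Dq r z).
Proof. intros Hr. apply sqrt_lt_R0. unfold Dq. pose proof (pow_lt r 4 Hr). nra. Qed.

Lemma sqrt_Dq_sqr (r z : R) : sqrt (Dq r z) ^ 2 = Dq r z.
Proof. rewrite <- Rsqr_pow2. apply Rsqr_sqrt. unfold Dq. nra. Qed.

Lemma sqrt_Dq_z0 (r : R) : 0 < r -> sqrt (Dq r 0) = r ^ 2.
Proof.
intros Hr. replace (Dq r 0) with ((r ^ 2) ^ 2) by (unfold Dq; ring).
apply sqrt_pow2. nra.
Qed.

Lemma quadratic_larger_root (k r z S F : R) :
  0 < k -> 0 < r -> 0 < S -> S ^ 2 = r ^ 4 + 16 * z ^ 2 ->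
  8 * k * z ^ 2 / S <= F -> F ^ 2 - k * S * F + 4 * k ^ 2 * z ^ 2 = 0 ->
  4 * k ^ 2 * z ^ 2 + k * F * r ^ 2 = F ^ 2.
Proof.
intros Hk Hr HS HS2 Hlow Hq.
assert (Hr2 : 0 < r ^ 2) by (apply pow_lt, Hr).
destruct (Req_dec z 0) as [-> | Hz].
- assert (S = r ^ 2) by nra. subst S. nra.
- assert (0 < z ^ 2) by (rewrite <- Rsqr_pow2; apply Rsqr_pos_lt, Hz).
  assert (HSr : r ^ 2 < S) by nra.
  assert (Hsmall : k * (S - r ^ 2) / 2 < 8 * k * z ^ 2 / S).
  { apply (Rmult_lt_reg_r S); [exact HS |].
    replace (8 * k * z ^ 2 / S * S) with (k * (S ^ 2 - r ^ 4) / 2)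
      by (rewrite HS2; field; lra).
    assert (0 < k * r ^ 2) by nra. nra. }
  assert (Hroots : (F - k * (S + r ^ 2) / 2) * (F - k * (S - r ^ 2) / 2) = 0).
  { transitivity (F ^ 2 - k * S * F + k ^ 2 * (S ^ 2 - r ^ 4) / 4);
      [field | rewrite HS2; lra]. }
  apply Rmult_integral in Hroots as [HF | HF]; [| lra].
  assert (F = k * (S + r ^ 2) / 2) by lra. subst F.
  replace (4 * k ^ 2 * z ^ 2) with (k ^ 2 * (S ^ 2 - r ^ 4) / 4) by (rewrite HS2; field).
  field.
Qed.

Section PointwiseIdentities.
Variables (k r th z pR pS : R).

Local Notation S := (sqrt (Dq r z)).
Local Notation A := (Af k r z pR pS).
Local Notation B := (Bf k r z pR pS).
Local Notation H := (Hf k r th z pR pS).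
Local Notation F1 := (F1f k r th z pR pS).
Local Notation F2 := (F2f k r th z pR pS).
Local Notation F3 := (F3f k r th z pR pS).

Ltac sqrt_field Hr :=
  pose proof (sqrt_Dq_pos r z Hr) as HS; pose proof (sqrt_Dq_sqr r z) as HS2;
  unfold Af, Bf, Hf, F3f, Dq in *;
  set (s := sqrt _) in *; field_mod_sqr HS2.

Lemma Af_Bf_sqr : 0 < r -> A ^ 2 + B ^ 2 = k ^ 2 + 2 * H * F3.
Proof. intros Hr. sqrt_field Hr. Qed.

Lemma F3f_surface : 0 < r -> F3 = 8 * z ^ 2 * H + k * S - r ^ 2 * B.
Proof. intros Hr. sqrt_field Hr. Qed.

Lemma F3f_lower_bound : 0 < r -> 8 * k * z ^ 2 / S <= F3.
Proof.
intros Hr. pose proof (pow_lt r 2 Hr).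
assert (0 <= pS ^ 2 / r ^ 2) by (apply Rdiv_le_0_compat; nra).
unfold F3f. unfold Rdiv at 3.
pose proof (pow2_ge_0 (2 * z * pR - r * pS)). nra.
Qed.

Lemma F1f_F2f_sqr : F1 ^ 2 + F2 ^ 2 = A ^ 2 + B ^ 2.
Proof.
pose proof (sin2_cos2 (2 * th)) as E. unfold Rsqr in E.
unfold F1f, F2f.
transitivity ((A ^ 2 + B ^ 2) * (sin (2 * th) * sin (2 * th) + cos (2 * th) * cos (2 * th)));
  [ring | rewrite E; ring].
Qed.

Lemma Bf_phase (J th0 : R) :
  F1 = J * sin (2 * th0) -> F2 = J * cos (2 * th0) -> B = J * cos (2 * (th - th0)).
Proof.
intros E1 E2. pose proof (sin2_cos2 (2 * th)) as E. unfold Rsqr in E.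
replace (2 * (th - th0)) with (2 * th - 2 * th0) by ring. rewrite cos_minus.
transitivity (F1 * sin (2 * th) + F2 * cos (2 * th)).
- unfold F1f, F2f.
  transitivity (B * (sin (2 * th) * sin (2 * th) + cos (2 * th) * cos (2 * th)));
    [rewrite E; ring | ring].
- rewrite E1, E2. ring.
Qed.

Lemma phase_amplitude_sqr (J th0 : R) : 0 < r ->
  F1 = J * sin (2 * th0) -> F2 = J * cos (2 * th0) -> J ^ 2 = k ^ 2 + 2 * H * F3.
Proof.
intros Hr E1 E2. rewrite <- Af_Bf_sqr, <- F1f_F2f_sqr, E1, E2 by exact Hr.
pose proof (sin2_cos2 (2 * th0)) as E. unfold Rsqr in E.
transitivity (J ^ 2 * (sin (2 * th0) * sin (2 * th0) + cos (2 * th0) * cos (2 * th0)));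
  [rewrite E | ]; ring.
Qed.

Lemma F3f_eq0 : 0 < k -> 0 < r -> F3 = 0 -> z = 0 /\ pS = 0.
Proof.
intros Hk Hr E. pose proof (sqrt_Dq_pos r z Hr) as HS.
pose proof (F3f_lower_bound Hr) as Hlow. rewrite E in Hlow.
assert (Hz : z = 0).
{ assert (8 * k * z ^ 2 <= 0).
  { replace (8 * k * z ^ 2) with (8 * k * z ^ 2 / S * S) by (field; lra). nra. }
  assert (z ^ 2 = 0) by nra.
  nra. }
split; [exact Hz |].
unfold F3f in E. rewrite Hz in E.
assert ((r * pS) ^ 2 = 0) by (rewrite <- E; ring).
assert (r * pS = 0) by nra. nra.
Qed.

Lemma Bf_eq0_ellipsoid : 0 < k -> 0 < r -> B = 0 -> k ^ 2 + 2 * H * F3 = 0 ->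
  4 * k ^ 2 * z ^ 2 + k * F3 * r ^ 2 = F3 ^ 2.
Proof.
intros Hk Hr HB HJ.
pose proof (F3f_surface Hr) as Hsurf. rewrite HB in Hsurf.
apply (quadratic_larger_root k r z S F3 Hk Hr (sqrt_Dq_pos r z Hr)).
- rewrite sqrt_Dq_sqr. reflexivity.
- exact (F3f_lower_bound Hr).
- transitivity (4 * z ^ 2 * (k ^ 2 + 2 * H * F3)); [| rewrite HJ; ring].
  replace (F3 ^ 2) with (F3 * F3) by ring. rewrite Hsurf at 1. ring.
Qed.

Lemma F3f_eq0_angle (J th0 : R) : 0 < k -> 0 < r -> F3 = 0 -> 0 <= J ->
  F1 = J * sin (2 * th0) -> F2 = J * cos (2 * th0) -> exists n : Z, th = th0 + IZR n * PI.
Proof.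
intros Hk Hr HF3 HJ E1 E2.
destruct (F3f_eq0 Hk Hr HF3) as [Hz HpS].
assert (HJk : J = k).
{ pose proof (phase_amplitude_sqr J th0 Hr E1 E2) as HJ2. rewrite HF3 in HJ2. nra. }
assert (HBk : B = k).
{ unfold Bf. rewrite Hz, HpS, sqrt_Dq_z0 by exact Hr. field. nra. }
pose proof (Bf_phase J th0 E1 E2) as HB. rewrite HBk, HJk in HB.
destruct (cos_2a_eq_1 (th - th0)) as [n Hn]; [| exists n; lra].
apply (Rmult_eq_reg_l k); lra.
Qed.

End PointwiseIdentities.

Section Trajectory.
Variables (k a b : R) (r th z pR pS : R -> R).
Hypothesis traj : is_trajectory k a b r th z pR pS.

Ltac derive_along t Ht :=
  destruct (traj _ Ht) as (Hr & Dr & Dth & Dz & DpR & DpS);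
  pose proof (sqrt_Dq_pos (r t) (z t) Hr) as HS;
  pose proof (sqrt_Dq_sqr (r t) (z t)) as HS2;
  assert (HD : 0 < Dq (r t) (z t)) by (rewrite <- HS2; nra);
  unfold Hf, F3f, Af, Bf, Dq in *;
  auto_derive;
  replace (r t * (r t * (r t * (r t * 1))) + 16 * (z t * (z t * 1)))
    with (r t ^ 4 + 16 * z t ^ 2) by ring;
  [ repeat split; try first [ eexists; eassumption | lra | intro; nra ]
  | rewrite ?(Derive_eta _ _ _ Dr), ?(Derive_eta _ _ _ Dth),
      ?(Derive_eta _ _ _ Dz), ?(Derive_eta _ _ _ DpR), ?(Derive_eta _ _ _ DpS);
    set (s := sqrt _) in *; field_mod_sqr HS2 ].

Lemma Hf_derive (t : R) : a < t < b ->
  is_derive (fun s => Hf k (r s) (th s) (z s) (pR s) (pS s)) t 0.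
Proof. intros Ht. derive_along t Ht. Qed.

Lemma F3f_derive (t : R) : a < t < b ->
  is_derive (fun s => F3f k (r s) (th s) (z s) (pR s) (pS s)) t 0.
Proof. intros Ht. derive_along t Ht. Qed.

Lemma Af_derive (t : R) : a < t < b ->
  is_derive (fun s => Af k (r s) (z s) (pR s) (pS s)) t
    (- 2 * (pS t / r t ^ 2) * Bf k (r t) (z t) (pR t) (pS t)).
Proof. intros Ht. derive_along t Ht. Qed.

Lemma Bf_derive (t : R) : a < t < b ->
  is_derive (fun s => Bf k (r s) (z s) (pR s) (pS s)) t
    (2 * (pS t / r t ^ 2) * Af k (r t) (z t) (pR t) (pS t)).
Proof. intros Ht. derive_along t Ht. Qed.

Lemma F1f_F2f_derive (t : R) : a < t < b ->
  is_derive (fun s => F1f k (r s) (th s) (z s) (pR s) (pS s)) t 0 /\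
  is_derive (fun s => F2f k (r s) (th s) (z s) (pR s) (pS s)) t 0.
Proof.
intros Ht. destruct (traj _ Ht) as (_ & _ & Dth & _).
exact (rotation_invariants (fun s => Af k (r s) (z s) (pR s) (pS s))
  (fun s => Bf k (r s) (z s) (pR s) (pS s)) th _ t Dth (Af_derive t Ht) (Bf_derive t Ht)).
Qed.

Variable t0 : R.
Hypothesis Ht0 : a < t0 < b.

Lemma first_integrals (t : R) : a < t < b ->
  Hf k (r t) (th t) (z t) (pR t) (pS t) = Hf k (r t0) (th t0) (z t0) (pR t0) (pS t0) /\
  F1f k (r t) (th t) (z t) (pR t) (pS t) = F1f k (r t0) (th t0) (z t0) (pR t0) (pS t0) /\
  F2f k (r t) (th t) (z t) (pR t) (pS t) = F2f k (r t0) (th t0) (z t0) (pR t0) (pS t0) /\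
  F3f k (r t) (th t) (z t) (pR t) (pS t) = F3f k (r t0) (th t0) (z t0) (pR t0) (pS t0).
Proof.
intros Ht. repeat split;
  match goal with |- ?F k (r t) (th t) (z t) (pR t) (pS t) = _ =>
    apply (is_derive_0_const (fun s => F k (r s) (th s) (z s) (pR s) (pS s)) a b); auto
  end; intros s Hs.
- exact (Hf_derive s Hs).
- exact (proj1 (F1f_F2f_derive s Hs)).
- exact (proj2 (F1f_F2f_derive s Hs)).
- exact (F3f_derive s Hs).
Qed.

Lemma F3f_eq0_th_const : 0 < k ->
  F3f k (r t0) (th t0) (z t0) (pR t0) (pS t0) = 0 -> forall t, a < t < b -> th t = th t0.
Proof.
intros Hk HF3 t Ht. apply (is_derive_0_const _ a b); auto. intros s Hs.
destruct (traj _ Hs) as (Hr & _ & Dth & _).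
destruct (first_integrals s Hs) as (_ & _ & _ & E3). rewrite HF3 in E3.
destruct (F3f_eq0 _ _ _ _ _ _ Hk Hr E3) as [_ HpS].
rewrite HpS, Rdiv_0_l in Dth. exact Dth.
Qed.

End Trajectory.

Theorem theorem3 (k a b t0 : R) (r th z pR pS : R -> R) (J th0 : R) :
  0 < k ->
  a < t0 < b ->
  is_trajectory k a b r th z pR pS ->
  let H0 := Hf k (r t0) (th t0) (z t0) (pR t0) (pS t0) in
  let F30 := F3f k (r t0) (th t0) (z t0) (pR t0) (pS t0) in
  0 <= J ->
  0 <= th0 < PI ->
  F1f k (r t0) (th t0) (z t0) (pR t0) (pS t0) = J * sin (2 * th0) ->
  F2f k (r t0) (th t0) (z t0) (pR t0) (pS t0) = J * cos (2 * th0) ->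
  forall t, a < t < b ->
    (0 < F30 -> 0 < J ->
       F30 = 8 * z t ^ 2 * H0 + k * sqrt (Dq (r t) (z t))
             - sqrt (k ^ 2 + 2 * H0 * F30) * r t ^ 2 * cos (2 * (th t - th0))) /\
    (0 < F30 -> J = 0 ->
       4 * k ^ 2 * z t ^ 2 + k * F30 * r t ^ 2 = F30 ^ 2) /\
    (F30 = 0 ->
       z t = 0 /\ exists n : Z, th t = th0 + IZR n * PI).
Proof.
intros Hk Ht0 traj H0 F30 HJ _ HF1 HF2 t Ht.
destruct (traj t Ht) as [Hr _]; destruct (traj t0 Ht0) as [Hr0 _].
destruct (first_integrals k a b r th z pR pS traj t0 Ht0 t Ht) as (EH & E1 & E2 & E3).
rewrite HF1 in E1; rewrite HF2 in E2.
assert (HJ2 : J ^ 2 = k ^ 2 + 2 * H0 * F30)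
  by exact (phase_amplitude_sqr _ _ _ _ _ _ J th0 Hr0 HF1 HF2).
assert (HJs : sqrt (k ^ 2 + 2 * H0 * F30) = J) by (rewrite <- HJ2; apply sqrt_pow2, HJ).
pose proof (Bf_phase _ _ _ _ _ _ J th0 E1 E2) as HB.
pose proof (F3f_surface k (r t) (th t) (z t) (pR t) (pS t) Hr) as Hsurf.
fold H0 F30 in EH, E3. rewrite EH, E3, HB in Hsurf.
split; [| split].
- intros _ _. rewrite HJs. lra.
- intros _ HJ0. rewrite HJ0, Rmult_0_l in HB.
  rewrite <- E3. apply Bf_eq0_ellipsoid; auto.
  rewrite EH, E3, <- HJ2, HJ0. ring.
- intros HF30. split.
  + apply (F3f_eq0 k (r t) (th t) (z t) (pR t) (pS t) Hk Hr). rewrite E3. exact HF30.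
  + rewrite (F3f_eq0_th_const k a b r th z pR pS traj t0 Ht0 Hk HF30 t Ht).
    exact (F3f_eq0_angle _ _ _ _ _ _ J th0 Hk Hr0 HF30 HJ HF1 HF2).
Qed.
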